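(* For every $\alpha>-\mu$ there exists $\gamma(\alpha)>0$ such that for every $N\in\mathbb N$ we have $\sum_{k=1}^{N-1}\frac{1}{\nu_{k,N}+\alpha}\leq\gamma(\alpha)$.
   Context: Fix $\mu>1$. For $N\in\mathbb N$ and $k\in\{0,\dots,N-1\}$ let $\nu_{k,N}=\mu\frac{\sin^2(k\pi/N)}{\sin^2(\pi/N)}$ (the eigenvalues of the discrete Laplacian $K_N$ on $\mathbb R^N$ with periodic boundary conditions, $(K_Nx)_k=\frac{\mu}{4\sin^2(\pi/N)}(2x_k-x_{k+1}-x_{k-1})$). An empty sum is $0$. *)

From Stdlib Require Import Reals.
Open Scope R_scope.

Definition nu (mu : R) (k N : nat) : R :=
  mu * (sin (INR k * PI / INR N))^2 / (sin (PI / INR N))^2.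

Fixpoint sum_range (f : nat -> R) (a n : nat) : R :=
  match n with
  | O => 0
  | S n' => f a + sum_range f (S a) n'
  end.

Definition sum_1_to_Nm1 (f : nat -> R) (N : nat) : R := sum_range f 1 (N - 1).

(* Since sin(kπ/N) ≥ sin(π/N) on the grid, every ν_{k,N} is at least μ, so ν + α ≥ d·ν
   with d = min(1, 1 + α/μ) > 0.  The parabolic lower bound sin x ≥ x(π − x)/(4π) together
   with sin(π/N) ≤ π/N gives ν_{k,N} ≥ μ (k(N−k)/(4N))², hence
   1/ν_{k,N} ≤ (16/μ)(1/k + 1/(N−k))² ≤ (32/μ)(1/k² + 1/(N−k)²),
   and the sum of 1/k² + 1/(N−k)² over 1 ≤ k ≤ N−1 telescopes to at most 4. *)
From Stdlib Require Import Reals Lra Lia.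
Open Scope R_scope.

Lemma sum_range_le (f g : nat -> R) (a n : nat) :
  (forall k, (a <= k < a + n)%nat -> f k <= g k) ->
  sum_range f a n <= sum_range g a n.
Proof.
revert a; induction n as [|n IH]; intros a Hfg; simpl; [lra|].
assert (f a <= g a) by (apply Hfg; lia).
assert (sum_range f (S a) n <= sum_range g (S a) n)
  by (apply IH; intros k Hk; apply Hfg; lia).
lra.
Qed.

Lemma sum_range_scal (c : R) (f : nat -> R) (a n : nat) :
  sum_range (fun k => c * f k) a n = c * sum_range f a n.
Proof.
revert a; induction n as [|n IH]; intros a; simpl; [ring|].
rewrite IH; ring.
Qed.

Lemma sum_range_le_telescope (g V : nat -> R) (a n : nat) :
  (forall k, (a <= k < a + n)%nat -> g k <= V (S k) - V k) ->
  sum_range g a n <= V (a + n)%nat - V a.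
Proof.
revert a; induction n as [|n IH]; intros a Hg; simpl.
- rewrite Nat.add_0_r; lra.
- assert (g a <= V (S a) - V a) by (apply Hg; lia).
  assert (sum_range g (S a) n <= V (S a + n)%nat - V (S a))
    by (apply IH; intros k Hk; apply Hg; lia).
  replace (a + S n)%nat with (S a + n)%nat by lia.
  lra.
Qed.

(* Each summand is bounded by the increment of [2/(N − j + 1) − 2/j] from [j = k] to [j = k + 1],
   since [1/k² ≤ 2/(k(k+1))]. *)
Lemma sum_inv_sq_pair_le (N : nat) :
  sum_range (fun k => / INR k ^ 2 + / (INR N - INR k) ^ 2) 1 (N - 1) <= 4.
Proof.
destruct (Nat.le_gt_cases N 1) as [HN | HN].
{ replace (N - 1)%nat with 0%nat by lia; simpl; lra. }
set (n := INR N).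
assert (Hn : 2 <= n) by (unfold n; replace 2 with (INR 2) by (simpl; lra); apply le_INR; lia).
set (W := fun j : nat => 2 / (n - INR j + 1) - 2 / INR j).
apply Rle_trans with (W (1 + (N - 1))%nat - W 1%nat).
- apply sum_range_le_telescope; intros k Hk.
  assert (Hr : 1 <= INR k) by (replace 1 with (INR 1) by (simpl; lra); apply le_INR; lia).
  assert (Hrn : INR k + 1 <= n) by (unfold n; rewrite <- S_INR; apply le_INR; lia).
  unfold W; rewrite S_INR.
  set (r := INR k) in *; set (s := n - r).
  assert (Hs : 1 <= s) by (unfold s; lra).
  replace (n - (r + 1) + 1) with s by (unfold s; ring).
  replace (n - r + 1) with (s + 1) by (unfold s; ring).
  assert (E : 2 / s - 2 / (r + 1) - (2 / (s + 1) - 2 / r)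
              = 2 / (r * (r + 1)) + 2 / (s * (s + 1))) by (field; lra).
  rewrite E.
  assert (/ r ^ 2 <= 2 / (r * (r + 1)))
    by (apply Rmult_le_reg_r with (r ^ 2 * (r + 1)); [nra|]; field_simplify; nra).
  assert (/ s ^ 2 <= 2 / (s * (s + 1)))
    by (apply Rmult_le_reg_r with (s ^ 2 * (s + 1)); [nra|]; field_simplify; nra).
  lra.
- replace (1 + (N - 1))%nat with N by lia.
  unfold W; fold n; simpl INR.
  replace (n - n + 1) with 1 by ring; replace (n - 1 + 1) with n by ring.
  assert (0 < 4 / n) by (apply Rdiv_lt_0_compat; lra).
  replace (2 / 1 - 2 / n - (2 / n - 2 / 1)) with (4 - 4 / n) by (field; lra).
  lra.
Qed.

Lemma sin_ge_quarter (x : R) : 0 <= x -> x <= PI / 2 -> x / 4 <= sin x.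
Proof.
intros Hx0 Hx. pose proof PI_4.
destruct (sin_bound x 0 Hx0 ltac:(lra)) as [Hsin _].
unfold sin_approx, sin_term in Hsin; simpl in Hsin; unfold Rdiv in *.
nra.
Qed.

Lemma sin_ge_parabola (x : R) : 0 <= x -> x <= PI -> x * (PI - x) / (4 * PI) <= sin x.
Proof.
intros Hx0 Hx. pose proof PI_RGT_0.
destruct (Rle_dec x (PI / 2)).
- apply Rle_trans with (x / 4); [|now apply sin_ge_quarter].
  apply Rmult_le_reg_r with (4 * PI); [lra|]. field_simplify; nra.
- rewrite <- sin_PI_x.
  apply Rle_trans with ((PI - x) / 4); [|apply sin_ge_quarter; lra].
  apply Rmult_le_reg_r with (4 * PI); [lra|]. field_simplify; nra.
Qed.

Lemma sin_le_sin_inner (a x : R) :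
  0 < a -> a <= PI / 2 -> a <= x -> x <= PI - a -> sin a <= sin x.
Proof.
intros. pose proof PI_RGT_0.
destruct (Rle_dec x (PI / 2)).
- apply sin_incr_1; lra.
- rewrite <- (sin_PI_x x). apply sin_incr_1; lra.
Qed.

Lemma nu_ge_of_sin_ratio (mu t : R) (k N : nat) :
  0 <= mu -> 0 <= t -> 0 < sin (PI / INR N) ->
  t * sin (PI / INR N) <= sin (INR k * PI / INR N) ->
  mu * t ^ 2 <= nu mu k N.
Proof.
intros Hmu Ht Hs1 Hratio. unfold nu.
set (s1 := sin (PI / INR N)) in *; set (sk := sin (INR k * PI / INR N)) in *.
assert (Hsq : t ^ 2 * s1 ^ 2 <= sk ^ 2)
  by (rewrite <- Rpow_mult_distr; apply pow_incr; nra).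
apply Rmult_le_reg_r with (s1 ^ 2); [nra|].
replace (mu * sk ^ 2 / s1 ^ 2 * s1 ^ 2) with (mu * sk ^ 2) by (field; lra).
nra.
Qed.

Section Grid.

Variables (k N : nat).
Hypotheses (Hk : (1 <= k)%nat) (HkN : (k < N)%nat).

Lemma grid_bounds : 1 <= INR k /\ INR k + 1 <= INR N.
Proof.
split.
- replace 1 with (INR 1) by (simpl; lra); apply le_INR; lia.
- rewrite <- S_INR; apply le_INR; lia.
Qed.

Lemma sin_PI_div_pos : 0 < sin (PI / INR N).
Proof.
destruct grid_bounds. pose proof PI_RGT_0.
apply sin_gt_0; [apply Rdiv_lt_0_compat; lra|].
apply Rmult_lt_reg_r with (INR N); [lra|]. field_simplify; nra.
Qed.

Lemma nu_ge_mu (mu : R) : 0 <= mu -> mu <= nu mu k N.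
Proof.
intros Hmu. destruct grid_bounds. pose proof PI_RGT_0.
replace mu with (mu * 1 ^ 2) at 1 by ring.
apply nu_ge_of_sin_ratio; [lra | lra | apply sin_PI_div_pos |].
rewrite Rmult_1_l.
apply sin_le_sin_inner.
- apply Rdiv_lt_0_compat; lra.
- apply Rmult_le_reg_r with (2 * INR N); [lra|]. field_simplify; nra.
- apply Rmult_le_reg_r with (INR N); [lra|]. field_simplify; nra.
- apply Rmult_le_reg_r with (INR N); [lra|]. field_simplify; nra.
Qed.

(* From [sin (kπ/N) ≥ π k (N − k) / (4N²)] (parabolic bound) and [sin (π/N) ≤ π/N]. *)
Lemma nu_ge_quartic (mu : R) :
  0 <= mu -> mu * (INR k * (INR N - INR k) / (4 * INR N)) ^ 2 <= nu mu k N.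
Proof.
intros Hmu. destruct grid_bounds. pose proof PI_RGT_0.
apply nu_ge_of_sin_ratio; [lra | | apply sin_PI_div_pos |].
all: set (r := INR k) in *; set (n := INR N) in *; clearbody r n.
{ apply Rle_mult_inv_pos; nra. }
assert (Hs1 : sin (PI / n) <= PI / n) by (left; apply sin_lt_x, Rdiv_lt_0_compat; lra).
apply Rle_trans with (r * (n - r) / (4 * n) * (PI / n)).
{ apply Rmult_le_compat_l; [apply Rle_mult_inv_pos; nra | exact Hs1]. }
replace (r * (n - r) / (4 * n) * (PI / n))
  with (r * PI / n * (PI - r * PI / n) / (4 * PI)) by (field; lra).
apply sin_ge_parabola.
- apply Rle_mult_inv_pos; nra.
- apply Rmult_le_reg_r with n; [lra|].
  replace (r * PI / n * n) with (r * PI) by (field; lra). nra.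
Qed.

End Grid.

Lemma shift_factor_pos (mu alpha : R) :
  0 < mu -> - mu < alpha -> 0 < Rmin 1 (1 + alpha / mu).
Proof.
intros Hmu Ha. apply Rmin_glb_lt; [lra|].
assert (-1 < alpha / mu) by (apply Rmult_lt_reg_r with mu; [lra|]; field_simplify; lra).
lra.
Qed.

Lemma shift_ge_scaled (mu alpha x : R) :
  0 < mu -> mu <= x -> - mu < alpha -> Rmin 1 (1 + alpha / mu) * x <= x + alpha.
Proof.
intros Hmu Hx Ha.
destruct (Rle_dec 0 alpha).
- assert (Rmin 1 (1 + alpha / mu) <= 1) by apply Rmin_l. nra.
- assert (Hd : Rmin 1 (1 + alpha / mu) <= 1 + alpha / mu) by apply Rmin_r.
  assert (E : (1 + alpha / mu) * x = x + alpha * (x / mu)) by (field; lra).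
  assert (1 <= x / mu) by (apply Rmult_le_reg_r with mu; [lra|]; field_simplify; lra).
  assert (Rmin 1 (1 + alpha / mu) * x <= (1 + alpha / mu) * x) by nra.
  nra.
Qed.

Lemma inv_harmonic_sq_le (r s : R) :
  0 < r -> 0 < s -> / (r * s / (r + s)) ^ 2 <= 2 * (/ r ^ 2 + / s ^ 2).
Proof.
intros Hr Hs.
replace (/ (r * s / (r + s)) ^ 2) with ((/ r + / s) ^ 2) by (field; lra).
assert (0 <= (/ r - / s) ^ 2) by apply pow2_ge_0.
replace (/ r ^ 2) with ((/ r) ^ 2) by (field; lra).
replace (/ s ^ 2) with ((/ s) ^ 2) by (field; lra).
nra.
Qed.

Lemma inv_nu_shift_le (mu alpha : R) (k N : nat) :
  0 < mu -> - mu < alpha -> (1 <= k)%nat -> (k < N)%nat ->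
  / (nu mu k N + alpha)
  <= 32 / (Rmin 1 (1 + alpha / mu) * mu) * (/ INR k ^ 2 + / (INR N - INR k) ^ 2).
Proof.
intros Hmu Ha Hk HkN.
destruct (grid_bounds k N Hk HkN) as [Hr Hrn].
pose proof (shift_factor_pos mu alpha Hmu Ha) as Hd.
set (d := Rmin 1 (1 + alpha / mu)) in *.
set (r := INR k) in *; set (n := INR N) in *.
set (h := r * (n - r) / n).
assert (Hh : 0 < h) by (apply Rdiv_lt_0_compat; nra).
assert (Hquart : mu * (h / 4) ^ 2 <= nu mu k N).
{ replace (h / 4) with (r * (n - r) / (4 * n)) by (unfold h; field; lra).
  apply nu_ge_quartic; [exact Hk | exact HkN | lra]. }
assert (Hshift : d * nu mu k N <= nu mu k N + alpha).
{ apply shift_ge_scaled; [exact Hmu | | exact Ha].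
  apply nu_ge_mu; [exact Hk | exact HkN | lra]. }
assert (Hpos : 0 < d * (mu * (h / 4) ^ 2)) by (apply Rmult_lt_0_compat; [|apply Rmult_lt_0_compat]; nra).
apply Rle_trans with (/ (d * (mu * (h / 4) ^ 2))).
{ apply Rinv_le_contravar; [exact Hpos|]. nra. }
replace (/ (d * (mu * (h / 4) ^ 2))) with (16 / (d * mu) * / h ^ 2) by (field; nra).
replace (32 / (d * mu)) with (16 / (d * mu) * 2) by (field; nra).
rewrite Rmult_assoc.
apply Rmult_le_compat_l; [apply Rlt_le, Rdiv_lt_0_compat; nra|].
replace h with (r * (n - r) / (r + (n - r))) by (unfold h; f_equal; ring).
apply inv_harmonic_sq_le; lra.
Qed.

Theorem lemma5p1 (mu : R) (hmu : 1 < mu) :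
  forall alpha : R, - mu < alpha ->
  exists gamma : R, 0 < gamma /\
    forall N : nat,
      sum_1_to_Nm1 (fun k => / (nu mu k N + alpha)) N <= gamma.
Proof.
intros alpha Ha.
set (c := 32 / (Rmin 1 (1 + alpha / mu) * mu)).
assert (Hc : 0 < c).
{ pose proof (shift_factor_pos mu alpha ltac:(lra) Ha).
  apply Rdiv_lt_0_compat; nra. }
exists (c * 4). split; [lra|].
intros N. unfold sum_1_to_Nm1.
apply Rle_trans with
  (sum_range (fun k => c * (/ INR k ^ 2 + / (INR N - INR k) ^ 2)) 1 (N - 1)).
- apply sum_range_le; intros k Hk.
  apply inv_nu_shift_le; [lra | exact Ha | lia | lia].
- rewrite sum_range_scal.
  apply Rmult_le_compat_l; [lra|].
  apply sum_inv_sq_pair_le.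
Qed.
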